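(* Assume $T\ge 3$. For every $z_k\in Z_\theta$ and every $t=0,1,\dots,T-3$, $\bar\epsilon_t(z_k)\le U^\epsilon_t(z_k)\le\bar U^\epsilon_t(\theta)$, where $$U^\epsilon_t(z_k)=\alpha^{T-1-t}\gamma_{T-1}\theta+2\theta\sum_{i=0}^{T-3-t}\sum_{n=1}^{T-1-t-i}\alpha^{n+i}\gamma_{t+i+n}\prod_{m=0}^{n-1}F_{t+i+m}\big(\max(\lambda_t(i),S_{t+i})+(m+1)\theta-s_{t+i+m+1}\big),$$ $$\bar U^\epsilon_t(\theta)=\alpha^{T-1-t}\gamma_{T-1}\theta+2\theta\sum_{i=0}^{T-3-t}\sum_{n=1}^{T-1-t-i}\alpha^{n+i}\gamma_{t+i+n}.$$
   Context: Model. Fix an integer horizon $T$, a discount factor $\alpha\in(0,1]$, and for $t=0,\dots,T-1$: unit ordering costs $c_t\in\mathbb R$, a salvage coefficient $c_T\in\mathbb R$, setup costs $K_t\ge 0$, functions $G_t:\mathbb R\to\mathbb R$, and independent nonnegative random demands $D_0,\dots,D_{T-1}$ with right-continuous distribution functions $F_t$ and finite means; all expectations appearing are assumed finite. Put $C_t(y)=(c_t-\alpha c_{t+1})y+G_t(y)+\alpha c_{t+1}E[D_t]$. Standing assumptions: (i) each $C_t$ is convex with $C_t(y)\to+\infty$ as $|y|\to\infty$; (ii) $K_t\ge \alpha K_{t+1}$ for $t=0,\dots,T-2$; (iii) there are constants $\gamma_t\ge 0$ with $|C_t(x)-C_t(y)|\le\gamma_t|x-y|$ for all $x,y$. Grid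 construction. Fix $\theta>0$, $z_m=m\theta$, $Z_\theta=\{z_m:m\in\mathbb Z\}$, $f_t(n)=F_t(z_{n+1})-F_t(z_n)$ ($n\ge -1$). $C^m_t=\min\{y: C_t(y)=\min_x C_t(x)\}$; with $z_{n_0}<C^m_t\le z_{n_0+1}$, $S^U_t=\min\{z_m\in Z_\theta: z_m\ge C^m_t,\ C_t(z_m)>C_t(z_{n_0})+K_t\}$. $s_{T-1}$ is a point with $s_{T-1}\le C^m_{T-1}$, $C_{T-1}(s_{T-1})=C_{T-1}(C^m_{T-1})+K_{T-1}$; $\bar I_{T-1}=s_{T-1}$. For $t=T-2,\dots,0$: $I_t=\max\{z_m\in Z_\theta: z_m<\min(\bar I_{t+1}-\theta,C^m_t)\}$, $\bar I_t=\max\{z_m\in Z_\theta: z_m\le I_t,\ C_t(z_m)>C_t(I_t)+K_t\}+\theta$. $H_{T-1}=C_{T-1}$, $S_{T-1}=C^m_{T-1}$; $V_t(y)=H_t(S_t)+K_t$ for $y<s_t$, $V_t(y)=H_t(y)$ for $y\ge s_t$. For $t=T-2,\dots,0$: $H_t(y)=C_t(y)+\alpha\sum_{n=-1}^\infty V_{t+1}(y-z_n)f_t(n)$; $S_t=\max\{z_m\in Z_\theta: I_t\le z_m\le S^U_t,\ H_t(z_m)=\min\{H_t(z_n):z_n\in Z_\theta, I_t\le z_n\le S^U_t\}\}$; $s_t=S_t$ if $K_t=0$, else $s_t=\min\{z_m\in Z_\theta:\bar I_t\le z_m\le S_t,\ H_t(z_m)\le H_t(S_t)+K_t\}$. Upper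 estimate functions. $\bar\psi_{T-1}(x,y)=\gamma_{T-1}x$; $\bar\varphi_{T-1}(x,y)=0$ if $y<s_{T-1}$ and $=\gamma_{T-1}x$ if $y\ge s_{T-1}$. For $t=0,\dots,T-2$, with $n$ the integer such that $z_{n-1}\le y-s_{t+1}<z_n$: $\bar\psi_t(x,y)=\gamma_tx$ if $y<s_{t+1}-\theta$, else $\bar\psi_t(x,y)=\gamma_tx+\alpha\sum_{m=-1}^{n-1}\bar\varphi_{t+1}(x,y-z_m)f_t(m)$; $\bar\varphi_t(x,y)=0$ if $y<s_t$, $=\bar\psi_t(y-s_t+\theta,y)$ if $y\ge s_t$ and $y-x<s_t$, $=\bar\psi_t(x,y)$ if $y\ge s_t$ and $y-x\ge s_t$. Bound $\bar\epsilon$. For $z_k\in Z_\theta$: $\bar\epsilon_{T-2}(z_k)=\alpha\gamma_{T-1}\theta$, and for $t=0,\dots,T-3$, $\bar\epsilon_t(z_k)=\alpha^{T-1-t}\gamma_{T-1}\theta+\sum_{i=0}^{T-3-t}2\alpha^i\big[\bar\psi_{t+i}(\theta,\max(\lambda_t(i),S_{t+i}))-\gamma_{t+i}\theta\big]$, where $\lambda_t(0)=z_k$ and $\lambda_t(i)=\max(\lambda_t(i-1),S_{t+i-1})+\theta$ for $i=1,\dots,T-3-t$. *)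

From Stdlib Require Import Reals Lra ZArith List ClassicalEpsilon.
From Coquelicot Require Import Coquelicot.
Open Scope R_scope.

(* Primitive data of the model.
   hor = T, alp = alpha, cc t = c_t (cc T = salvage c_T), KK t = K_t,
   GG t = G_t, FF t = distribution function F_t of D_t,
   ED t = E[D_t], gam t = gamma_t. *)
Record model := Model {
  hor : nat; alp : R; cc : nat -> R; KK : nat -> R; GG : nat -> R -> R;
  FF : nat -> R -> R; ED : nat -> R; gam : nat -> R }.

Definition sumZ (a b : Z) (g : Z -> R) : R :=
  fold_right Rplus 0 (map (fun j => g (a + Z.of_nat j)%Z) (seq 0 (Z.to_nat (b - a + 1)))).
Definition sumN (a b : nat) (g : nat -> R) : R :=
  fold_right Rplus 0 (map g (seq a (S b - a))).
Definition prodN (a b : nat) (g : nat -> R) : R :=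
  fold_right Rmult 1 (map g (seq a (S b - a))).

Definition minZ (P : Z -> Prop) : Z :=
  epsilon (inhabits 0%Z) (fun m => P m /\ forall n, P n -> (m <= n)%Z).
Definition maxZ (P : Z -> Prop) : Z :=
  epsilon (inhabits 0%Z) (fun m => P m /\ forall n, P n -> (n <= m)%Z).

Definition Cfun (M : model) (t : nat) (y : R) : R :=
  (cc M t - alp M * cc M (S t)) * y + GG M t y + alp M * cc M (S t) * ED M t.

Definition Cm (M : model) (t : nat) : R :=
  epsilon (inhabits 0) (fun y => (forall x, Cfun M t y <= Cfun M t x) /\
     forall y', (forall x, Cfun M t y' <= Cfun M t x) -> y <= y').

Record stage := Stage { sH : R -> R; sS : R; ss : R; sIb : R }.

Definition Vof (st : stage) (Kt : R) (y : R) : R :=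
  if Rlt_dec y (ss st) then sH st (sS st) + Kt else sH st y.

Section Grid.
Variable M : model.
Variable theta : R.
Variable sT1 : R.

Definition z (m : Z) : R := IZR m * theta.

Definition f (t : nat) (n : Z) : R := FF M t (z (n + 1)) - FF M t (z n).

Definition n0 (t : nat) : Z :=
  epsilon (inhabits 0%Z) (fun n => z n < Cm M t <= z (n + 1)).

Definition SU (t : nat) : R :=
  z (minZ (fun m => Cm M t <= z m /\ Cfun M t (z m) > Cfun M t (z (n0 t)) + KK M t)).

(* stageK k holds (H_t, S_t, s_t, Ibar_t) for t = T-1-k *)
Fixpoint stageK (k : nat) : stage :=
  match k with
  | O => Stage (Cfun M (hor M - 1)) (Cm M (hor M - 1)) sT1 sT1
  | S k' =>
    let nx := stageK k' in
    let t := (hor M - 2 - k')%nat in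
    let V := Vof nx (KK M (S t)) in
    let H := fun y => Cfun M t y +
       alp M * Series (fun j => V (y - z (Z.of_nat j - 1)) * f t (Z.of_nat j - 1)) in
    let I := z (maxZ (fun m => z m < Rmin (sIb nx - theta) (Cm M t))) in
    let Ib := z (maxZ (fun m => z m <= I /\ Cfun M t (z m) > Cfun M t I + KK M t)) + theta in
    let St := z (maxZ (fun m => I <= z m <= SU t /\
                  forall n, I <= z n <= SU t -> H (z m) <= H (z n))) in
    let st := if Req_EM_T (KK M t) 0 then St
              else z (minZ (fun m => Ib <= z m <= St /\ H (z m) <= H St + KK M t)) in
    Stage H St st Ib
  end.

Definition stg (t : nat) : stage := stageK (hor M - 1 - t).
Definition Hf (t : nat) : R -> R := sH (stg t).
Definition Sx (t : nat) : R := sS (stg t).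
Definition sx (t : nat) : R := ss (stg t).
Definition Ibar (t : nat) : R := sIb (stg t).
Definition Vf (t : nat) : R -> R := Vof (stg t) (KK M t).

Definition nidx (y s : R) : Z :=
  epsilon (inhabits 0%Z) (fun n => z (n - 1) <= y - s < z n).

(* ppK k = (psibar_t, phibar_t) for t = T-1-k *)
Fixpoint ppK (k : nat) : (R -> R -> R) * (R -> R -> R) :=
  match k with
  | O => (fun x _ => gam M (hor M - 1) * x,
          fun x y => if Rlt_dec y (sx (hor M - 1)) then 0 else gam M (hor M - 1) * x)
  | S k' =>
    let t := (hor M - 2 - k')%nat in
    let phi1 := snd (ppK k') in
    let psi := fun x y =>
      if Rlt_dec y (sx (S t) - theta) then gam M t * x
      else gam M t * x + alp M *
        sumZ (-1) (nidx y (sx (S t)) - 1) (fun m => phi1 x (y - z m) * f t m) in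
    let phi := fun x y =>
      if Rlt_dec y (sx t) then 0
      else if Rlt_dec (y - x) (sx t) then psi (y - sx t + theta) y
      else psi x y in
    (psi, phi)
  end.

Definition psibar (t : nat) : R -> R -> R := fst (ppK (hor M - 1 - t)).
Definition phibar (t : nat) : R -> R -> R := snd (ppK (hor M - 1 - t)).

Fixpoint lam (t : nat) (x : R) (i : nat) : R :=
  match i with
  | O => x
  | S i' => Rmax (lam t x i') (Sx (t + i')) + theta
  end.

Definition epsbar (t : nat) (x : R) : R :=
  if Nat.eqb t (hor M - 2) then alp M * gam M (hor M - 1) * theta
  else alp M ^ (hor M - 1 - t) * gam M (hor M - 1) * theta +
    sumN 0 (hor M - 3 - t) (fun i =>
      2 * alp M ^ i * (psibar (t + i) theta (Rmax (lam t x i) (Sx (t + i)))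
                       - gam M (t + i) * theta)).

Definition Ueps (t : nat) (x : R) : R :=
  alp M ^ (hor M - 1 - t) * gam M (hor M - 1) * theta +
  2 * theta * sumN 0 (hor M - 3 - t) (fun i =>
    sumN 1 (hor M - 1 - t - i) (fun n =>
      alp M ^ (n + i) * gam M (t + i + n) *
      prodN 0 (n - 1) (fun m =>
        FF M (t + i + m) (Rmax (lam t x i) (Sx (t + i)) + INR (m + 1) * theta
                          - sx (t + i + m + 1))))).

End Grid.

Definition Ubar (M : model) (theta : R) (t : nat) : R :=
  alp M ^ (hor M - 1 - t) * gam M (hor M - 1) * theta +
  2 * theta * sumN 0 (hor M - 3 - t) (fun i =>
    sumN 1 (hor M - 1 - t - i) (fun n => alp M ^ (n + i) * gam M (t + i + n))).

Definition is_cdf_nonneg (Fd : R -> R) : Prop :=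
  (forall x y, x <= y -> Fd x <= Fd y) /\
  (forall x, filterlim Fd (at_right x) (locally (Fd x))) /\
  is_lim Fd p_infty (Finite 1) /\
  (forall x, x < 0 -> Fd x = 0).

Definition convex_fun (g : R -> R) : Prop :=
  forall x y l, 0 <= l <= 1 -> g (l * x + (1 - l) * y) <= l * g x + (1 - l) * g y.

Definition standing (M : model) (theta : R) : Prop :=
  0 < alp M <= 1 /\ 0 < theta /\
  (forall t, (t < hor M)%nat -> 0 <= KK M t) /\
  (* F_t is the cdf of the nonnegative demand D_t, and ED t = E[D_t] is finite *)
  (forall t, (t < hor M)%nat -> is_cdf_nonneg (FF M t) /\
      is_RInt_gen (fun x => 1 - FF M t x) (at_point 0) (Rbar_locally p_infty) (ED M t)) /\
  (forall t, (t < hor M)%nat -> convex_fun (Cfun M t) /\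
      is_lim (Cfun M t) p_infty p_infty /\ is_lim (Cfun M t) m_infty p_infty) /\
  (forall t, (t + 2 <= hor M)%nat -> KK M t >= alp M * KK M (S t)) /\
  (forall t, (t < hor M)%nat -> 0 <= gam M t /\
      forall x y, Rabs (Cfun M t x - Cfun M t y) <= gam M t * Rabs (x - y)).

Definition sT1_ok (M : model) (sT1 : R) : Prop :=
  sT1 <= Cm M (hor M - 1) /\
  Cfun M (hor M - 1) sT1 = Cfun M (hor M - 1) (Cm M (hor M - 1)) + KK M (hor M - 1).

Definition expectations_finite (M : model) (theta sT1 : R) : Prop :=
  forall t, (S t < hor M)%nat -> forall y,
    ex_series (fun j => Rabs (Vf M theta sT1 (S t) (y - z theta (Z.of_nat j - 1))
                              * f M theta t (Z.of_nat j - 1))).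

From Pilot Require Import Defs.
From Stdlib Require Import Reals ZArith Lra Lia List ClassicalEpsilon.
From Coquelicot Require Import Coquelicot.
Open Scope R_scope.

(* The heart of the argument is a closed-form majorant for the upper estimate
   functions evaluated at x = theta.  For a grid point y put
     B_t(y) = gamma_t theta
              + theta sum_{n=1}^{T-1-t} alpha^n gamma_{t+n}
                  prod_{m=0}^{n-1} F_{t+m}(y + (m+1) theta - s_{t+m+1}).
   B_t is nondecreasing in y and satisfies the one-step recursion
     B_t(y) = gamma_t theta + alpha F_t(y + theta - s_{t+1}) B_{t+1}(y + theta).
   By backward induction on t we show psibar_t(theta, y) <= B_t(y) and
   phibar_t(theta, y) <= B_t(y) on the grid: in psibar_t the sum of
   phibar_{t+1}(theta, y - z_m) f_t(m) over m = -1 .. n-1 is bounded by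
   B_{t+1}(y + theta) times a telescoping sum of the f_t(m), i.e. by
   B_{t+1}(y + theta) F_t(y + theta - s_{t+1}); phibar_t either vanishes or
   reduces to psibar_t(theta, y) because grid points closer than theta coincide.
   Plugging this into the definition of epsbar_t gives the first inequality;
   the second follows since every F is bounded by 1. *)

Lemma fold_sum_le {A} (g1 g2 : A -> R) (l : list A) :
  (forall x, In x l -> g1 x <= g2 x) ->
  fold_right Rplus 0 (map g1 l) <= fold_right Rplus 0 (map g2 l).
Proof.
  induction l as [|a l IH]; simpl; intros H; [lra|].
  apply Rplus_le_compat; [apply H; auto | apply IH; intros; apply H; auto].
Qed.

Lemma fold_sum_scal {A} (c : R) (g : A -> R) (l : list A) :
  fold_right Rplus 0 (map (fun x => c * g x) l) = c * fold_right Rplus 0 (map g l).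
Proof. induction l as [|a l IH]; simpl; [ring | rewrite IH; ring]. Qed.

Lemma fold_sum_ext {A} (g1 g2 : A -> R) (l : list A) :
  (forall x, In x l -> g1 x = g2 x) ->
  fold_right Rplus 0 (map g1 l) = fold_right Rplus 0 (map g2 l).
Proof.
  induction l as [|a l IH]; simpl; intros H; [lra|].
  rewrite H, IH; auto.
Qed.

Lemma fold_prod_ext {A} (g1 g2 : A -> R) (l : list A) :
  (forall x, In x l -> g1 x = g2 x) ->
  fold_right Rmult 1 (map g1 l) = fold_right Rmult 1 (map g2 l).
Proof.
  induction l as [|a l IH]; simpl; intros H; [lra|].
  rewrite H, IH; auto.
Qed.

Lemma fold_prod_le {A} (g1 g2 : A -> R) (l : list A) :
  (forall x, In x l -> 0 <= g1 x <= g2 x) ->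
  0 <= fold_right Rmult 1 (map g1 l) <= fold_right Rmult 1 (map g2 l).
Proof.
  induction l as [|a l IH]; simpl; intros H; [lra|].
  destruct (H a (or_introl eq_refl)) as [Ha1 Ha2].
  destruct IH as [IH1 IH2]; [intros; apply H; auto|].
  split; [apply Rmult_le_pos | apply Rmult_le_compat]; auto.
Qed.

Lemma fold_prod_one {A} (l : list A) :
  fold_right Rmult 1 (map (fun _ => 1) l) = 1.
Proof. induction l as [|a l IH]; simpl; [ring | rewrite IH; ring]. Qed.

Lemma map_seq_succ {A} (G : nat -> A) (a n : nat) :
  map G (seq (S a) n) = map (fun j => G (S j)) (seq a n).
Proof. rewrite <- seq_shift, map_map. reflexivity. Qed.

Lemma sumN_le (a b : nat) (g1 g2 : nat -> R) :
  (forall n, (a <= n <= b)%nat -> g1 n <= g2 n) -> sumN a b g1 <= sumN a b g2.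
Proof. intros H; apply fold_sum_le; intros x Hx; apply in_seq in Hx; apply H; lia. Qed.

Lemma sumN_ext (a b : nat) (g1 g2 : nat -> R) :
  (forall n, (a <= n <= b)%nat -> g1 n = g2 n) -> sumN a b g1 = sumN a b g2.
Proof. intros H; apply fold_sum_ext; intros x Hx; apply in_seq in Hx; apply H; lia. Qed.

Lemma sumN_scal (a b : nat) (c : R) (g : nat -> R) :
  sumN a b (fun n => c * g n) = c * sumN a b g.
Proof. apply fold_sum_scal. Qed.

Lemma sumN_nonneg (a b : nat) (g : nat -> R) :
  (forall n, (a <= n <= b)%nat -> 0 <= g n) -> 0 <= sumN a b g.
Proof.
  intros H. replace 0 with (sumN a b (fun n => 0 * g n)) at 1
    by (rewrite sumN_scal; ring).
  apply sumN_le; intros n Hn; rewrite Rmult_0_l; auto.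
Qed.

Lemma sumN_first (b : nat) (g : nat -> R) :
  sumN 1 (S b) g = g 1%nat + sumN 1 b (fun n => g (S n)).
Proof.
  unfold sumN. replace (S (S b) - 1)%nat with (S b) by lia.
  replace (S b - 1)%nat with b by lia. simpl. rewrite map_seq_succ. reflexivity.
Qed.

Lemma prodN_first (n : nat) (g : nat -> R) :
  prodN 0 (S n) g = g 0%nat * prodN 0 n (fun m => g (S m)).
Proof.
  unfold prodN. replace (S (S n) - 0)%nat with (S (S n)) by lia.
  replace (S n - 0)%nat with (S n) by lia. simpl. rewrite map_seq_succ. reflexivity.
Qed.

Lemma prodN_single (g : nat -> R) : prodN 0 0 g = g 0%nat.
Proof. unfold prodN; simpl; ring. Qed.

Lemma prodN_ext (n : nat) (g1 g2 : nat -> R) :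
  (forall m, (m <= n)%nat -> g1 m = g2 m) -> prodN 0 n g1 = prodN 0 n g2.
Proof. intros H; apply fold_prod_ext; intros x Hx; apply in_seq in Hx; apply H; lia. Qed.

Lemma prodN_le (n : nat) (g1 g2 : nat -> R) :
  (forall m, (m <= n)%nat -> 0 <= g1 m <= g2 m) ->
  0 <= prodN 0 n g1 <= prodN 0 n g2.
Proof. intros H; apply fold_prod_le; intros x Hx; apply in_seq in Hx; apply H; lia. Qed.

Lemma prodN_le_1 (n : nat) (g : nat -> R) :
  (forall m, (m <= n)%nat -> 0 <= g m <= 1) -> prodN 0 n g <= 1.
Proof.
  intros H. rewrite <- (fold_prod_one (seq 0 (S n - 0))).
  apply (prodN_le n g (fun _ => 1) H).
Qed.

Lemma sumZ_le (a b : Z) (g1 g2 : Z -> R) :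
  (forall m, (a <= m)%Z -> g1 m <= g2 m) -> sumZ a b g1 <= sumZ a b g2.
Proof. intros H; apply fold_sum_le; intros; apply H; lia. Qed.

Lemma sumZ_scal (a b : Z) (c : R) (g : Z -> R) :
  sumZ a b (fun m => c * g m) = c * sumZ a b g.
Proof. apply (fold_sum_scal c (fun j => g (a + Z.of_nat j)%Z)). Qed.

Lemma fold_sum_telescope (h : Z -> R) (N : nat) : forall a,
  fold_right Rplus 0
    (map (fun j => h (a + Z.of_nat j + 1)%Z - h (a + Z.of_nat j)%Z) (seq 0 N))
  = h (a + Z.of_nat N)%Z - h a.
Proof.
  induction N as [|N IH]; intros a; simpl.
  - rewrite Z.add_0_r; ring.
  - rewrite map_seq_succ.
    rewrite (map_ext _ (fun j => h ((a + 1) + Z.of_nat j + 1)%Z - h ((a + 1) + Z.of_nat j)%Z))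
      by (intros j; rewrite Nat2Z.inj_succ; f_equal; f_equal; lia).
    rewrite IH, !Z.add_0_r.
    replace (a + 1 + Z.of_nat N)%Z with (a + Z.pos (Pos.of_succ_nat N))%Z by lia.
    ring.
Qed.

Lemma sumZ_telescope (h : Z -> R) (n : Z) : (0 <= n)%Z ->
  sumZ (-1) (n - 1) (fun m => h (m + 1)%Z - h m) = h n - h (-1)%Z.
Proof. intros Hn. unfold sumZ. rewrite fold_sum_telescope. do 2 f_equal. lia. Qed.

Definition on_grid (th y : R) : Prop := exists j, y = z th j.

Lemma z_sub (th : R) (a b : Z) : z th a - z th b = z th (a - b).
Proof. unfold z. rewrite minus_IZR. ring. Qed.

Lemma z_succ (th : R) (a : Z) : z th (a + 1) = z th a + th.
Proof. unfold z. rewrite plus_IZR. simpl. ring. Qed.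

Lemma on_grid_sub (th y : R) (m : Z) : on_grid th y -> on_grid th (y - z th m).
Proof. intros [j ->]. exists (j - m)%Z. apply z_sub. Qed.

Lemma on_grid_succ (th y : R) : on_grid th y -> on_grid th (y + th).
Proof. intros [j ->]. exists (j + 1)%Z. symmetry; apply z_succ. Qed.

Lemma grid_points_close (th : R) (a b : Z) :
  0 < th -> z th a <= z th b < z th a + th -> z th b = z th a.
Proof.
  intros Hth [H1 H2]. unfold z in *.
  assert (Hab : IZR a <= IZR b) by (apply Rmult_le_reg_r with th; lra).
  assert (Hba : IZR b < IZR (a + 1)) by (rewrite plus_IZR; apply Rmult_lt_reg_r with th; lra).
  apply le_IZR in Hab. apply lt_IZR in Hba. replace b with a by lia. reflexivity.
Qed.

Lemma nidx_spec (th y s : R) : 0 < th ->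
  z th (nidx th y s - 1) <= y - s < z th (nidx th y s).
Proof.
  intros Hth. unfold nidx. apply epsilon_spec.
  exists (up ((y - s) / th)). destruct (archimed ((y - s) / th)) as [A1 A2].
  unfold z. rewrite minus_IZR. simpl.
  assert (Hinv : 0 < / th) by (apply Rinv_0_lt_compat; lra).
  split.
  - apply Rmult_le_reg_r with (/ th); auto.
    rewrite Rmult_assoc, Rinv_r by lra. unfold Rdiv in *. lra.
  - apply Rmult_lt_reg_r with (/ th); auto.
    rewrite Rmult_assoc, Rinv_r by lra. unfold Rdiv in *. lra.
Qed.

Lemma nidx_nonneg (th y s : R) : 0 < th -> s - th <= y -> (0 <= nidx th y s)%Z.
Proof.
  intros Hth Hy. destruct (nidx_spec th y s Hth) as [_ Hlt].
  assert (Hz : z th (-1) < z th (nidx th y s)) by (unfold z at 1; simpl; lra).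
  unfold z in Hz. apply Rmult_lt_reg_r, lt_IZR in Hz; lia || lra.
Qed.

Lemma nidx_upper (th y s : R) : 0 < th -> z th (nidx th y s) <= y - s + th.
Proof.
  intros Hth. destruct (nidx_spec th y s Hth) as [Hle _].
  rewrite <- (Z.sub_add 1 (nidx th y s)), z_succ. lra.
Qed.

Lemma cdf_mono (Fd : R -> R) : is_cdf_nonneg Fd -> forall x y, x <= y -> Fd x <= Fd y.
Proof. intros [H _]; exact H. Qed.

Lemma cdf_bounds (Fd : R -> R) : is_cdf_nonneg Fd -> forall x, 0 <= Fd x <= 1.
Proof.
  intros HF x. destruct HF as [Hm [_ [Hl Hn]]]. split.
  - destruct (Rlt_dec x 0) as [Hx|Hx]; [rewrite Hn; lra|].
    rewrite <- (Hn (-1)) by lra. apply Hm; lra.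
  - assert (Hle : Rbar_le (Fd x) 1).
    { apply (is_lim_le_loc (fun _ => Fd x) Fd p_infty); [|apply is_lim_const | exact Hl].
      exists x. intros y Hy. apply Hm; lra. }
    exact Hle.
Qed.

Lemma standing_theta (M : model) (th : R) : standing M th -> 0 < th.
Proof. intros H; apply H. Qed.

Lemma standing_alpha (M : model) (th : R) : standing M th -> 0 < alp M <= 1.
Proof. intros H; apply H. Qed.

Lemma standing_cdf (M : model) (th : R) :
  standing M th -> forall t, (t < hor M)%nat -> is_cdf_nonneg (FF M t).
Proof. intros H t Ht. apply (proj1 (proj1 (proj2 (proj2 (proj2 H))) t Ht)). Qed.

Lemma standing_gamma (M : model) (th : R) :
  standing M th -> forall t, (t < hor M)%nat -> 0 <= gam M t.
Proof. intros H t Ht. destruct H as [_ [_ [_ [_ [_ [_ H]]]]]]. apply (H t Ht). Qed.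

Section UpperEstimates.

Variables (M : model) (th sT1 : R).

Lemma sx_on_grid (t : nat) : (t + 2 <= hor M)%nat -> on_grid th (sx M th sT1 t).
Proof.
  intros Ht. unfold sx, stg. replace (hor M - 1 - t)%nat with (S (hor M - 2 - t)) by lia.
  cbn [stageK ss]. cbv zeta. destruct (Req_EM_T _ _); eexists; reflexivity.
Qed.

Lemma Sx_on_grid (t : nat) : (t + 2 <= hor M)%nat -> on_grid th (Sx M th sT1 t).
Proof.
  intros Ht. unfold Sx, stg. replace (hor M - 1 - t)%nat with (S (hor M - 2 - t)) by lia.
  cbn [stageK sS]. eexists; reflexivity.
Qed.

(* max(lambda_t(i), S_{t+i}), the argument of psibar in epsbar_t, is a grid point. *)
Lemma lam_max_on_grid (t : nat) (x : R) : on_grid th x ->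
  forall i, (t + i + 2 <= hor M)%nat ->
  on_grid th (Rmax (lam M th sT1 t x i) (Sx M th sT1 (t + i))).
Proof.
  intros Hx. induction i as [|i IH]; intros Hi.
  - apply Rmax_case; [exact Hx | apply Sx_on_grid; lia].
  - apply Rmax_case; [|apply Sx_on_grid; lia].
    simpl. apply on_grid_succ, IH. lia.
Qed.

Lemma psibar_eq (t : nat) (x y : R) : (t + 2 <= hor M)%nat ->
  psibar M th sT1 t x y =
  if Rlt_dec y (sx M th sT1 (S t) - th) then gam M t * x
  else gam M t * x + alp M *
    sumZ (-1) (nidx th y (sx M th sT1 (S t)) - 1)
      (fun m => phibar M th sT1 (S t) x (y - z th m) * Defs.f M th t m).
Proof.
  intros Ht. unfold psibar, phibar.
  replace (hor M - 1 - t)%nat with (S (hor M - 2 - t)) by lia.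
  replace (hor M - 1 - S t)%nat with (hor M - 2 - t)%nat by lia.
  cbn [ppK fst snd].
  replace (hor M - 2 - (hor M - 2 - t))%nat with t by lia. reflexivity.
Qed.

Lemma phibar_eq (t : nat) (x y : R) : (t + 2 <= hor M)%nat ->
  phibar M th sT1 t x y =
  if Rlt_dec y (sx M th sT1 t) then 0
  else if Rlt_dec (y - x) (sx M th sT1 t) then psibar M th sT1 t (y - sx M th sT1 t + th) y
  else psibar M th sT1 t x y.
Proof.
  intros Ht. unfold psibar, phibar.
  replace (hor M - 1 - t)%nat with (S (hor M - 2 - t)) by lia.
  cbn [ppK fst snd].
  replace (hor M - 2 - (hor M - 2 - t))%nat with t by lia. reflexivity.
Qed.

Lemma phibar_last (x y : R) :
  phibar M th sT1 (hor M - 1) x y =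
  if Rlt_dec y (sx M th sT1 (hor M - 1)) then 0 else gam M (hor M - 1) * x.
Proof.
  unfold phibar. replace (hor M - 1 - (hor M - 1))%nat with 0%nat by lia. reflexivity.
Qed.

Definition tail_term (t : nat) (y : R) (n : nat) : R :=
  alp M ^ n * gam M (t + n) *
  prodN 0 (n - 1) (fun m => FF M (t + m) (y + INR (m + 1) * th - sx M th sT1 (t + m + 1))).

Definition majorant (t : nat) (y : R) : R :=
  gam M t * th + th * sumN 1 (hor M - 1 - t) (tail_term t y).

Lemma tail_term_one (t : nat) (y : R) :
  tail_term t y 1 = alp M * gam M (S t) * FF M t (y + th - sx M th sT1 (S t)).
Proof.
  unfold tail_term. simpl. rewrite prodN_single, !Nat.add_0_r, Nat.add_1_r.
  f_equal; [ring | f_equal; simpl; ring].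
Qed.

Lemma tail_term_succ (t : nat) (y : R) (n : nat) : (1 <= n)%nat ->
  tail_term t y (S n) =
  alp M * FF M t (y + th - sx M th sT1 (S t)) * tail_term (S t) (y + th) n.
Proof.
  intros Hn. unfold tail_term.
  replace (S n - 1)%nat with (S (n - 1)) by lia. rewrite prodN_first.
  rewrite (prodN_ext (n - 1) _
     (fun m => FF M (S t + m) (y + th + INR (m + 1) * th - sx M th sT1 (S t + m + 1)))).
  - rewrite Nat.add_0_r, <- plus_n_Sm, Nat.add_succ_l. simpl pow.
    replace (t + 1)%nat with (S t) by lia.
    replace (y + INR (0 + 1) * th) with (y + th) by (simpl; ring). ring.
  - intros m _.
    replace (t + S m)%nat with (S t + m)%nat by lia.
    replace (t + S m + 1)%nat with (S t + m + 1)%nat by lia.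
    f_equal. rewrite !plus_INR, S_INR. simpl. ring.
Qed.

Lemma majorant_rec (t : nat) (y : R) : (t + 2 <= hor M)%nat ->
  majorant t y =
  gam M t * th + alp M * FF M t (y + th - sx M th sT1 (S t)) * majorant (S t) (y + th).
Proof.
  intros Ht. unfold majorant.
  replace (hor M - 1 - t)%nat with (S (hor M - 1 - S t)) by lia.
  rewrite sumN_first, tail_term_one.
  rewrite (sumN_ext 1 _ _
     (fun n => alp M * FF M t (y + th - sx M th sT1 (S t)) * tail_term (S t) (y + th) n))
    by (intros n Hn; apply tail_term_succ; lia).
  rewrite sumN_scal. ring.
Qed.

Hypothesis Hst : standing M th.

Lemma tail_term_mono (t : nat) (y1 y2 : R) (n : nat) :
  (t + n < hor M)%nat -> y1 <= y2 -> 0 <= tail_term t y1 n <= tail_term t y2 n.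
Proof.
  intros Htn Hy. unfold tail_term.
  assert (Hcoef : 0 <= alp M ^ n * gam M (t + n)).
  { apply Rmult_le_pos; [apply pow_le; apply standing_alpha in Hst; lra |].
    apply (standing_gamma _ _ Hst); lia. }
  destruct (prodN_le (n - 1)
     (fun m => FF M (t + m) (y1 + INR (m + 1) * th - sx M th sT1 (t + m + 1)))
     (fun m => FF M (t + m) (y2 + INR (m + 1) * th - sx M th sT1 (t + m + 1))))
    as [P1 P2].
  { intros m Hm. assert (HF : is_cdf_nonneg (FF M (t + m))) by (apply (standing_cdf _ _ Hst); lia).
    split; [apply (cdf_bounds _ HF) | apply (cdf_mono _ HF); lra]. }
  split; [apply Rmult_le_pos | apply Rmult_le_compat_l]; auto.
Qed.

Lemma majorant_mono (t : nat) (y1 y2 : R) : (t < hor M)%nat -> y1 <= y2 ->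
  0 <= majorant t y1 <= majorant t y2.
Proof.
  intros Ht Hy. unfold majorant.
  pose proof (standing_theta _ _ Hst) as Hth.
  assert (Hg : 0 <= gam M t) by (apply (standing_gamma _ _ Hst); lia).
  assert (S0 : 0 <= sumN 1 (hor M - 1 - t) (tail_term t y1))
    by (apply sumN_nonneg; intros n Hn; apply (tail_term_mono t y1 y1 n); lia || lra).
  assert (S1 : sumN 1 (hor M - 1 - t) (tail_term t y1) <= sumN 1 (hor M - 1 - t) (tail_term t y2))
    by (apply sumN_le; intros n Hn; apply (tail_term_mono t y1 y2 n); lia || lra).
  split; [apply Rplus_le_le_0_compat; apply Rmult_le_pos | apply Rplus_le_compat_l,
    Rmult_le_compat_l]; lra.
Qed.

(* Base case t = T-1: phibar_{T-1}(theta, y) is 0 or gamma_{T-1} theta = B_{T-1}(y). *)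
Lemma phibar_last_bound (y : R) : (1 <= hor M)%nat ->
  phibar M th sT1 (hor M - 1) th y <= majorant (hor M - 1) y.
Proof.
  intros Hhor. rewrite phibar_last. destruct (Rlt_dec _ _).
  - apply (majorant_mono (hor M - 1) y y); [lia | lra].
  - unfold majorant. replace (hor M - 1 - (hor M - 1))%nat with 0%nat by lia.
    unfold sumN. simpl. lra.
Qed.

Lemma f_nonneg (t : nat) (m : Z) : (t < hor M)%nat -> 0 <= Defs.f M th t m.
Proof.
  intros Ht. unfold Defs.f. rewrite z_succ.
  pose proof (standing_theta _ _ Hst).
  pose proof (cdf_mono _ (standing_cdf _ _ Hst t Ht) (z th m) (z th m + th)). lra.
Qed.

(* If g(m) <= B for m >= -1, then sum_{m=-1}^{n-1} g(m) f_t(m) <= B F_t(z_n):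
   the f_t(m) telescope and F_t vanishes at z_{-1} < 0. *)
Lemma sum_against_f_le (t : nat) (n : Z) (g : Z -> R) (B : R) :
  (t < hor M)%nat -> (0 <= n)%Z -> (forall m, (-1 <= m)%Z -> g m <= B) ->
  sumZ (-1) (n - 1) (fun m => g m * Defs.f M th t m) <= B * FF M t (z th n).
Proof.
  intros Ht Hn Hg. pose proof (standing_cdf _ _ Hst t Ht) as HF.
  apply Rle_trans with (sumZ (-1) (n - 1) (fun m => B * Defs.f M th t m)).
  { apply sumZ_le. intros m Hm. apply Rmult_le_compat_r; auto using f_nonneg. }
  rewrite sumZ_scal. unfold Defs.f.
  rewrite (sumZ_telescope (fun m => FF M t (z th m)) n Hn).
  destruct HF as [_ [_ [_ Hneg]]].
  rewrite (Hneg (z th (-1))) by (unfold z; simpl; apply standing_theta in Hst; lra).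
  lra.
Qed.

Lemma psibar_bound (t : nat) : (t + 2 <= hor M)%nat ->
  (forall y, on_grid th y -> phibar M th sT1 (S t) th y <= majorant (S t) y) ->
  forall y, on_grid th y -> psibar M th sT1 t th y <= majorant t y.
Proof.
  intros Ht IH y Hy.
  pose proof (standing_theta _ _ Hst) as Hth. pose proof (standing_alpha _ _ Hst) as Hal.
  set (s1 := sx M th sT1 (S t)).
  set (B := majorant (S t) (y + th)).
  assert (HB : 0 <= B) by (apply (majorant_mono (S t) (y + th) (y + th)); lia || lra).
  assert (HF : is_cdf_nonneg (FF M t)) by (apply (standing_cdf _ _ Hst); lia).
  pose proof (cdf_bounds _ HF (y + th - s1)) as HFy.
  rewrite psibar_eq, majorant_rec by lia. fold s1 B.
  destruct (Rlt_dec _ _) as [_ | Hge].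
  { assert (0 <= alp M * FF M t (y + th - s1) * B)
      by (apply Rmult_le_pos; [apply Rmult_le_pos|]; lra). lra. }
  set (n := nidx th y s1).
  assert (Hn : (0 <= n)%Z) by (apply nidx_nonneg; lra).
  assert (Hsum : sumZ (-1) (n - 1) (fun m => phibar M th sT1 (S t) th (y - z th m) * Defs.f M th t m)
                 <= B * FF M t (z th n)).
  { apply sum_against_f_le; [lia | exact Hn |]. intros m Hm.
    eapply Rle_trans; [apply IH, on_grid_sub, Hy|].
    apply (majorant_mono (S t)); [lia|].
    assert (-1 <= IZR m) by (apply IZR_le; lia). unfold z. nra. }
  assert (HFn : FF M t (z th n) <= FF M t (y + th - s1))
    by (apply (cdf_mono _ HF); pose proof (nidx_upper th y s1 Hth) as Hu; fold n in Hu; lra).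
  assert (B * FF M t (z th n) <= FF M t (y + th - s1) * B) by nra.
  apply Rplus_le_compat_l. rewrite Rmult_assoc. apply Rmult_le_compat_l; lra.
Qed.

(* Inductive step for phibar: phibar_t(theta, y) is 0, or psibar_t(theta, y)
   (when y - theta < s_t <= y, the grid points y and s_t coincide). *)
Lemma phibar_bound (t : nat) : (t + 2 <= hor M)%nat ->
  (forall y, on_grid th y -> psibar M th sT1 t th y <= majorant t y) ->
  forall y, on_grid th y -> phibar M th sT1 t th y <= majorant t y.
Proof.
  intros Ht Hpsi y Hy.
  rewrite phibar_eq by lia.
  destruct (Rlt_dec _ _) as [_ | Hs].
  { apply (majorant_mono t y y); lia || lra. }
  destruct (Rlt_dec _ _) as [Hclose | _]; [|apply Hpsi, Hy].
  destruct (sx_on_grid t ltac:(lia)) as [a Ha]. destruct Hy as [b Hb].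
  assert (Hys : y = sx M th sT1 t).
  { rewrite Ha, Hb. apply grid_points_close; [apply (standing_theta _ _ Hst)|].
    rewrite <- Ha, <- Hb. lra. }
  replace (y - sx M th sT1 t + th) with th by lra. apply Hpsi. exists b; exact Hb.
Qed.

Lemma phibar_le_majorant (k : nat) : forall t, (t + k + 1 = hor M)%nat ->
  forall y, on_grid th y -> phibar M th sT1 t th y <= majorant t y.
Proof.
  induction k as [|k IH]; intros t Htk y Hy.
  - replace t with (hor M - 1)%nat by lia. apply phibar_last_bound. lia.
  - apply phibar_bound; [lia | | exact Hy].
    apply psibar_bound; [lia |]. apply IH. lia.
Qed.

Lemma psibar_le_majorant (t : nat) (y : R) : (t + 2 <= hor M)%nat -> on_grid th y ->
  psibar M th sT1 t th y <= majorant t y.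
Proof.
  intros Ht. apply psibar_bound; [exact Ht |].
  apply (phibar_le_majorant (hor M - 2 - t)). lia.
Qed.

Lemma epsbar_le_Ueps (t : nat) (x : R) : (t + 3 <= hor M)%nat -> on_grid th x ->
  epsbar M th sT1 t x <= Ueps M th sT1 t x.
Proof.
  intros Ht Hx. pose proof (standing_alpha _ _ Hst) as Hal.
  unfold epsbar, Ueps.
  replace (Nat.eqb t (hor M - 2)) with false by (symmetry; apply Nat.eqb_neq; lia).
  apply Rplus_le_compat_l. rewrite <- sumN_scal. apply sumN_le. intros i Hi.
  set (Y := Rmax (lam M th sT1 t x i) (Sx M th sT1 (t + i))).
  assert (Hpsi : psibar M th sT1 (t + i) th Y <= majorant (t + i) Y)
    by (apply psibar_le_majorant; [lia | apply lam_max_on_grid; auto; lia]).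
  unfold majorant in Hpsi.
  replace (hor M - 1 - t - i)%nat with (hor M - 1 - (t + i))%nat by lia.
  rewrite (sumN_ext 1 _ _ (fun n => alp M ^ i * tail_term (t + i) Y n))
    by (intros n _; unfold tail_term; rewrite pow_add; ring).
  rewrite sumN_scal.
  assert (0 <= alp M ^ i) by (apply pow_le; lra).
  nra.
Qed.

(* Second inequality of Theorem 4.5: every probability weight is at most 1. *)
Lemma Ueps_le_Ubar (t : nat) (x : R) : (t + 3 <= hor M)%nat ->
  Ueps M th sT1 t x <= Ubar M th t.
Proof.
  intros Ht. pose proof (standing_theta _ _ Hst). pose proof (standing_alpha _ _ Hst).
  unfold Ueps, Ubar. apply Rplus_le_compat_l, Rmult_le_compat_l; [lra|].
  apply sumN_le. intros i Hi. apply sumN_le. intros n Hn.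
  assert (0 <= alp M ^ (n + i) * gam M (t + i + n)).
  { apply Rmult_le_pos; [apply pow_le; lra | apply (standing_gamma _ _ Hst); lia]. }
  assert (prodN 0 (n - 1) (fun m => FF M (t + i + m)
     (Rmax (lam M th sT1 t x i) (Sx M th sT1 (t + i)) + INR (m + 1) * th
      - sx M th sT1 (t + i + m + 1))) <= 1).
  { apply prodN_le_1. intros m Hm. apply cdf_bounds, (standing_cdf _ _ Hst). lia. }
  nra.
Qed.

End UpperEstimates.

Theorem theorem4p5 (M : model) (theta sT1 : R) :
  standing M theta -> sT1_ok M sT1 -> expectations_finite M theta sT1 ->
  (3 <= hor M)%nat ->
  forall (k : Z) (t : nat), (t <= hor M - 3)%nat ->
    epsbar M theta sT1 t (z theta k) <= Ueps M theta sT1 t (z theta k) /\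
    Ueps M theta sT1 t (z theta k) <= Ubar M theta t.
Proof.
  intros Hst _ _ H3 k t Ht. split.
  - apply epsbar_le_Ueps; [exact Hst | lia | exists k; reflexivity].
  - apply Ueps_le_Ubar; [exact Hst | lia].
Qed.
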